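(* Let $(X,S_b)$ be an $S_b$-metric space with $b\geq 1$, let $x_1,x_2\in X$, and let $f:X\to X$ be a self-mapping for which there exist $\alpha\in(0,1)$ and a non-decreasing function $\varphi:(0,\infty)\to(1,\infty)$ such that for all $x\in X\setminus\{x_1,x_2\}$, $$S_b(x,x,fx)>0 \implies \varphi\big(S_b(x,x,fx)\big)\leq \big[\varphi\big(S_b(x,x,x_1)\,S_b(x,x,x_2)\big)\big]^{\alpha}$$ (i.e. $f$ is a Jleli-Samet type $C_{x_1,x_2}$-$S_b$-contraction). Let $$r=\inf\{S_b(x,x,fx): x\neq fx,\ x\in X\}.$$ If $fx_1=x_1$ and $fx_2=x_2$, then $f$ fixes the Cassini curve $C^{S_b}_r(x_1,x_2)=\{x\in X: S_b(x,x,x_1)\,S_b(x,x,x_2)=r\}$, i.e. $fx=x$ for every $x\in C^{S_b}_r(x_1,x_2)$.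
   Context: An $S_b$-metric space $(X,S_b)$ with constant $b\geq 1$ is a nonempty set $X$ with a function $S_b:X\times X\times X\to[0,\infty)$ such that for all $x,y,z,a\in X$: (1) $S_b(x,y,z)=0$ if and only if $x=y=z$; (2) $S_b(x,y,z)\leq b[S_b(x,x,a)+S_b(y,y,a)+S_b(z,z,a)]$. A mapping $f$ fixes a set $\mathcal{F}\subseteq X$ if $\mathcal{F}$ is contained in the fixed point set $\{x\in X: fx=x\}$. *)

From Stdlib Require Import Reals.
Open Scope R_scope.

Definition Sb_metric (X : Type) (b : R) (S : X -> X -> X -> R) : Prop :=
  1 <= b /\
  (forall x y z, 0 <= S x y z) /\
  (forall x y z, S x y z = 0 <-> (x = y /\ y = z)) /\
  (forall x y z a, S x y z <= b * (S x x a + S y y a + S z z a)).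

Definition is_inf (A : R -> Prop) (r : R) : Prop :=
  (forall t, A t -> r <= t) /\ (forall m, (forall t, A t -> m <= t) -> m <= r).

Definition JS_Cx1x2_Sb_contraction (X : Type) (S : X -> X -> X -> R)
  (f : X -> X) (x1 x2 : X) (alpha : R) (phi : R -> R) : Prop :=
  0 < alpha < 1 /\
  (forall t, 0 < t -> 1 < phi t) /\
  (forall s t, 0 < s -> s <= t -> phi s <= phi t) /\
  (forall x, x <> x1 -> x <> x2 -> 0 < S x x (f x) ->
     phi (S x x (f x)) <= Rpower (phi (S x x x1 * S x x x2)) alpha).

Definition cassini (X : Type) (S : X -> X -> X -> R) (r : R) (x1 x2 : X) (x : X) : Prop :=
  S x x x1 * S x x x2 = r.

(* If [x] lies on the Cassini curve but [f x <> x], then [x] differs from the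
   fixed points [x1], [x2], so the contraction gives
   [phi (S x x (f x)) <= phi r ^ alpha < phi r]; since [phi] is non-decreasing
   this forces [S x x (f x) < r], contradicting the definition of [r] as an
   infimum of such displacements. *)
From Stdlib Require Import Reals Lra Classical.
Open Scope R_scope.

Lemma Sb_pos_neq (X : Type) (b : R) (S : X -> X -> X -> R) (x y : X) :
  Sb_metric X b S -> x <> y -> 0 < S x x y.
Proof.
  intros [_ [Hnn [Hz _]]] Hxy.
  destruct (Rle_lt_or_eq_dec 0 (S x x y) (Hnn x x y)) as [Hlt|Heq]; [exact Hlt|].
  exfalso; apply Hxy, (proj1 (Hz x x y)); auto.
Qed.

Lemma Rpower_lt_self (a alpha : R) : 1 < a -> alpha < 1 -> Rpower a alpha < a.
Proof.
  intros Ha Halpha.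
  rewrite <- (Rpower_1 a) at 2 by lra.
  apply Rpower_lt; assumption.
Qed.

Lemma JS_contraction_displacement_lt (X : Type) (b : R) (S : X -> X -> X -> R)
  (f : X -> X) (x1 x2 : X) (alpha : R) (phi : R -> R) (x : X) :
  Sb_metric X b S -> JS_Cx1x2_Sb_contraction X S f x1 x2 alpha phi ->
  x <> x1 -> x <> x2 -> x <> f x ->
  S x x (f x) < S x x x1 * S x x x2.
Proof.
  intros HS [Halpha [Hphi1 [Hmono Hcontr]]] Hx1 Hx2 Hfx.
  set (p := S x x x1 * S x x x2).
  pose proof (Sb_pos_neq X b S x (f x) HS Hfx) as Hdisp.
  assert (Hp : 0 < p)
    by (apply Rmult_lt_0_compat; apply (Sb_pos_neq X b); assumption).
  assert (Hphi_lt : phi (S x x (f x)) < phi p).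
  { apply Rle_lt_trans with (Rpower (phi p) alpha); [now apply Hcontr|].
    apply Rpower_lt_self; [apply Hphi1 | ]; lra. }
  destruct (Rlt_or_le (S x x (f x)) p) as [Hlt|Hge]; [exact Hlt|].
  pose proof (Hmono p (S x x (f x)) Hp Hge); lra.
Qed.

Theorem theorem2p14 (X : Type) (b : R) (S : X -> X -> X -> R)
  (x1 x2 : X) (f : X -> X) (alpha : R) (phi : R -> R) (r : R) :
  Sb_metric X b S ->
  JS_Cx1x2_Sb_contraction X S f x1 x2 alpha phi ->
  is_inf (fun t => exists x : X, x <> f x /\ t = S x x (f x)) r ->
  f x1 = x1 -> f x2 = x2 ->
  forall x, cassini X S r x1 x2 x -> f x = x.
Proof.
  intros HS Hcontr [Hlb _] Hf1 Hf2 x Hcas.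
  destruct (classic (f x = x)) as [Hfix|Hmove]; [exact Hfix|exfalso].
  assert (Hx1 : x <> x1) by (intros ->; auto).
  assert (Hx2 : x <> x2) by (intros ->; auto).
  assert (Hr_le : r <= S x x (f x)) by (apply Hlb; exists x; auto).
  pose proof (JS_contraction_displacement_lt X b S f x1 x2 alpha phi x
                HS Hcontr Hx1 Hx2 (not_eq_sym Hmove)) as Hlt.
  unfold cassini in Hcas; lra.
Qed.
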